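(* Let $\varepsilon>0$ and let $\alpha,\beta\in\mathbb{Z}[\mathrm{i}]$ be non-zero multiplicatively independent Gaussian integers with $|\alpha|>1$ and $|\beta|>1$. Then there exist integers $m,n>0$ such that $|\alpha^m-\beta^n|<\varepsilon|\beta^n|$.
   Context: $\alpha,\beta$ are multiplicatively independent if there are no positive integers $j,k$ with $\beta^j=\alpha^k$. *)

From HB Require Import structures.
From mathcomp Require Import all_boot all_order all_algebra all_field.
Set Implicit Arguments. Unset Strict Implicit. Unset Printing Implicit Defensive.
Import Order.TTheory GRing.Theory Num.Theory.
Local Open Scope ring_scope.

Definition gaussian_int (z : algC) : Prop :=
  exists a b : int, z = a%:~R + b%:~R * 'i.

Definition mult_indep (alpha beta : algC) : Prop :=
  ~ exists j k : nat, [/\ (0 < j)%N, (0 < k)%N & beta ^+ j = alpha ^+ k].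

From HB Require Import structures.
From mathcomp Require Import all_boot all_order all_algebra all_field.
From mathcomp Require Import ring.
Set Implicit Arguments. Unset Strict Implicit. Unset Printing Implicit Defensive.
Import Order.TTheory GRing.Theory Num.Theory.
Local Open Scope ring_scope.

(* Let M(n) be the least m with |beta|^n < |alpha|^m;
   then the ratios w_n = beta^n / alpha^M(n) lie in the annulus
   1/|alpha| <= |w| < 1.  By pigeonhole two of them, w_n1 and w_n2 with
   n1 < n2, are arbitrarily close, and
     alpha^(M n2 - M n1) - beta^(n2 - n1) = beta^(n2 - n1) (w_n1 - w_n2) / w_n2
   is then small relative to beta^(n2 - n1). *)

Lemma bernoulli_ler (R : numDomainType) (h : R) (n : nat) :
  0 <= h -> 1 + h *+ n <= (1 + h) ^+ n.
Proof.
move=> h_ge0; elim: n => [|n IHn]; first by rewrite mulr0n addr0 expr0.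
have h1_ge0 : 0 <= 1 + h by rewrite addr_ge0.
rewrite exprS -subr_ge0.
have -> : (1 + h) * (1 + h) ^+ n - (1 + h *+ n.+1) =
          (1 + h) * ((1 + h) ^+ n - (1 + h *+ n)) + h * h *+ n.
  by rewrite mulrSr; ring.
by rewrite addr_ge0 ?mulrn_wge0 ?mulr_ge0 // subr_ge0.
Qed.

Lemma exists_exprn_gt (R : archiNumFieldType) (x y : R) :
  1 < x -> 0 <= y -> exists m : nat, y < x ^+ m.
Proof.
move=> x_gt1 y_ge0; set h := x - 1.
have h_gt0 : 0 < h by rewrite subr_gt0.
have -> : x = 1 + h by rewrite subrKC.
exists (Num.bound (y / h)).
have /archi_boundP : 0 <= y / h by rewrite divr_ge0 // ltW.
rewrite ltr_pdivrMr // => /lt_le_trans; apply.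
apply: le_trans (bernoulli_ler _ (ltW h_gt0)).
by rewrite mulr_natl lerDr.
Qed.

Lemma pigeonhole_nat (T : finType) (f : nat -> T) :
  exists n1 n2 : nat, (n1 < n2)%N /\ f n1 = f n2.
Proof.
pose g (i : 'I_#|T|.+1) := f i.
have /injectivePn[i [j ij gij]] : ~~ injectiveb g.
  by apply/injectiveP => /leq_card; rewrite card_ord ltnn.
case: (ltngtP i j) => [lt_ij | lt_ji | /val_inj eq_ij].
- by exists i, j.
- by exists j, i.
- by rewrite eq_ij eqxx in ij.
Qed.

Lemma truncn_eq_dist (R : archiNumFieldType) (h x y : R) :
  0 < h -> 0 <= x -> 0 <= y ->
  Num.truncn (x / h) = Num.truncn (y / h) -> `|x - y| < h.
Proof.
move=> h_gt0 x_ge0 y_ge0 eq_xy.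
have /andP[x_lo x_hi] := truncn_itv (divr_ge0 x_ge0 (ltW h_gt0)).
have /andP[y_lo y_hi] := truncn_itv (divr_ge0 y_ge0 (ltW h_gt0)).
rewrite eq_xy in x_lo x_hi.
have dist_lt1 : `|x / h - y / h| < 1.
  rewrite real_ltr_norml ?rpredB ?ger0_real ?divr_ge0 ?(ltW h_gt0) //.
  apply/andP; split.
    by rewrite ltrBrDl ltrBlDr (lt_le_trans y_hi) // -natr1 lerD2r.
  by rewrite ltrBlDr (lt_le_trans x_hi) // -natr1 addrC lerD2l.
by rewrite -mulrBl normrM normfV (gtr0_norm h_gt0) ltr_pdivrMr // mul1r in dist_lt1.
Qed.

Lemma norm_exprn_sub1_ge (F : numFieldType) (x : F) (k : nat) :
  1 < `|x| -> (0 < k)%N -> (1 - `|x|^-1) * `|x ^+ k| <= `|x ^+ k - 1|.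
Proof.
move=> x_gt1 k_gt0; apply: le_trans (lerB_dist _ _); rewrite normr1.
rewrite mulrBl mul1r lerD2l lerN2 normrX -(prednK k_gt0) exprS.
by rewrite mulKf ?exprn_ege1 ?ltW // gt_eqF // (lt_trans ltr01).
Qed.

Lemma sub_exprn_ratio (F : fieldType) (a b : F) (n1 k M1 m : nat) :
  a != 0 -> b != 0 ->
  a ^+ m - b ^+ k = b ^+ k * (b ^+ n1 / a ^+ M1 - b ^+ (n1 + k) / a ^+ (M1 + m))
                    / (b ^+ (n1 + k) / a ^+ (M1 + m)).
Proof.
move=> a_neq0 b_neq0; rewrite !exprD.
by field; rewrite !expf_neq0.
Qed.

Section ComplexPlane.
Variable C : archiClosedFieldType.
Implicit Types z w : C.

Lemma normC_Im_le z : `|'Im z| <= `|z|.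
Proof.
by rewrite -normrN -ReMil (le_trans (leif_normC_Re_Creal _)) // normrM normCi mul1r.
Qed.

Lemma normC_le_Re_Im z : `|z| <= `|'Re z| + `|'Im z|.
Proof.
rewrite {1}[z]Crect (le_trans (ler_normD _ _)) //.
by rewrite normrM normCi mul1r.
Qed.

(* Cut the square [-1, 1]^2 into a grid of cells of side d / 2. *)
Lemma unit_disk_close_pair (w : nat -> C) (d : C) :
  0 < d -> (forall n, `|w n| <= 1) ->
  exists n1 n2 : nat, (n1 < n2)%N /\ `|w n1 - w n2| < d.
Proof.
move=> d_gt0 w_le1; pose h := d / 2%:R.
have h_gt0 : 0 < h by rewrite divr_gt0.
pose cell x := Num.truncn ((x + 1) / h).
pose K := Num.truncn (2%:R / h).
have shift_ge0 (x : C) : x \is Num.real -> `|x| <= 1 -> 0 <= x + 1.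
  by move=> x_real /(real_lerNnormlW x_real); rewrite -lerBlDr sub0r.
have cell_le x : x \is Num.real -> `|x| <= 1 -> (cell x < K.+1)%N.
  move=> x_real x_le1; rewrite ltnS le_truncn // ler_pM2r ?invr_gt0 //.
  by rewrite -[2%:R]/(1 + 1) lerD2r (le_trans (real_ler_norm _)).
have Re_le n : `|'Re (w n)| <= 1 by rewrite (le_trans (leif_normC_Re_Creal _)).
have Im_le n : `|'Im (w n)| <= 1 by rewrite (le_trans (normC_Im_le _)).
have cell_dist x y : x \is Num.real -> y \is Num.real ->
    `|x| <= 1 -> `|y| <= 1 -> cell x = cell y -> `|x - y| < h.
  move=> x_real y_real x_le1 y_le1 /truncn_eq_dist.
  by rewrite opprD addrACA subrr addr0; apply; rewrite ?shift_ge0.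
pose f n : 'I_K.+1 * 'I_K.+1 := (inord (cell ('Re (w n))), inord (cell ('Im (w n)))).
have [n1 [n2 [lt_n12 [/(congr1 val) eq_Re /(congr1 val) eq_Im]]]] := pigeonhole_nat f.
rewrite /= !inordK ?cell_le ?Creal_Re ?Creal_Im // in eq_Re eq_Im.
exists n1, n2; split=> //.
rewrite (le_lt_trans (normC_le_Re_Im _)) // [X in _ < X](splitr d) !raddfB /=.
by rewrite ltrD ?cell_dist ?Creal_Re ?Creal_Im.
Qed.

End ComplexPlane.

Section DominatingExponent.
Variable R : archiNumFieldType.
Variables x y : R.
Hypotheses (x_gt1 : 1 < x) (y_ge1 : 1 <= y).

Lemma exists_exprn_dom (n : nat) : exists m : nat, y ^+ n < x ^+ m.
Proof. by apply: exists_exprn_gt; rewrite // exprn_ge0 // (le_trans ler01). Qed.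

Definition dom_exp (n : nat) : nat := ex_minn (exists_exprn_dom n).

Lemma dom_expP (n : nat) : y ^+ n < x ^+ dom_exp n.
Proof. by rewrite /dom_exp; case: ex_minnP. Qed.

Lemma dom_exp_min (n m : nat) : y ^+ n < x ^+ m -> (dom_exp n <= m)%N.
Proof. by rewrite /dom_exp; case: ex_minnP => k _; apply. Qed.

Lemma dom_exp_homo : {homo dom_exp : n1 n2 / (n1 <= n2)%N}.
Proof.
move=> n1 n2 le_n12; apply: dom_exp_min; apply: le_lt_trans (dom_expP n2).
exact: ler_weXn2l.
Qed.

Lemma exprn_dom_exp_le (n : nat) : x ^+ dom_exp n <= x * y ^+ n.
Proof.
have x_gt0 : 0 < x := lt_trans ltr01 x_gt1.
case E: (dom_exp n) => [|m]; first by rewrite expr0 mulr_ege1 ?exprn_ege1 // ltW.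
have y_gt0 : 0 < y := lt_le_trans ltr01 y_ge1.
rewrite exprS ler_pM2l // real_leNgt ?ger0_real ?exprn_ge0 ?ltW //.
by apply/negP => /dom_exp_min; rewrite E ltnn.
Qed.

End DominatingExponent.

Section PowerRatios.
Variable F : archiNumFieldType.
Variables a b : F.
Hypotheses (a_gt1 : 1 < `|a|) (b_gt1 : 1 < `|b|).

Let M := dom_exp a_gt1 (ltW b_gt1).

Definition pow_ratio (n : nat) : F := b ^+ n / a ^+ M n.

Let a_neq0 : a != 0. Proof. by rewrite -normr_gt0 (lt_trans ltr01). Qed.
Let b_neq0 : b != 0. Proof. by rewrite -normr_gt0 (lt_trans ltr01). Qed.

Lemma norm_pow_ratio (n : nat) : `|pow_ratio n| = `|b| ^+ n / `|a| ^+ M n.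
Proof. by rewrite normrM normfV !normrX. Qed.

Lemma norm_pow_ratio_lt1 (n : nat) : `|pow_ratio n| < 1.
Proof.
by rewrite norm_pow_ratio ltr_pdivrMr ?mul1r ?dom_expP ?exprn_gt0 ?(lt_trans ltr01).
Qed.

Lemma inv_norm_pow_ratio_le (n : nat) : `|pow_ratio n|^-1 <= `|a|.
Proof.
rewrite norm_pow_ratio invf_div ler_pdivrMr ?exprn_gt0 ?(lt_trans ltr01) //.
exact: exprn_dom_exp_le.
Qed.

Lemma close_pow_ratios (n1 n2 : nat) (eta : F) :
  (n1 < n2)%N -> eta <= 1 - `|b|^-1 ->
  `|a| * `|pow_ratio n1 - pow_ratio n2| < eta ->
  exists m n : nat, [/\ (0 < m)%N, (0 < n)%N & `|a ^+ m - b ^+ n| < eta * `|b ^+ n|].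
Proof.
move=> lt_n12 eta_le close.
have le_n12 := ltnW lt_n12; have le_M12 : (M n1 <= M n2)%N by apply: dom_exp_homo.
have k_gt0 : (0 < n2 - n1)%N by rewrite subn_gt0.
have powers_close :
    `|a ^+ (M n2 - M n1) - b ^+ (n2 - n1)| < eta * `|b ^+ (n2 - n1)|.
  rewrite (sub_exprn_ratio n1 _ (M n1) _ a_neq0 b_neq0) !subnKC //.
  rewrite -/(pow_ratio n1) -/(pow_ratio n2) !normrM normfV -mulrA mulrC.
  rewrite ltr_pM2r ?normr_gt0 ?expf_neq0 // mulrC (le_lt_trans _ close) //.
  by rewrite ler_wpM2r ?inv_norm_pow_ratio_le.
exists (M n2 - M n1)%N, (n2 - n1)%N; split=> //.
rewrite lt0n; apply/eqP => M_eq; move: powers_close; rewrite M_eq expr0 distrC.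
move=> /(le_lt_trans (norm_exprn_sub1_ge b_gt1 k_gt0)).
by rewrite ltr_pM2r ?normr_gt0 ?expf_neq0 // => /(le_lt_trans eta_le); rewrite ltxx.
Qed.

End PowerRatios.

Lemma exists_close_powers (C : archiClosedFieldType) (eps a b : C) :
  0 < eps -> 1 < `|a| -> 1 < `|b| ->
  exists m n : nat, [/\ (0 < m)%N, (0 < n)%N & `|a ^+ m - b ^+ n| < eps * `|b ^+ n|].
Proof.
move=> eps_gt0 a_gt1 b_gt1.
have c_gt0 : 0 < 1 - `|b|^-1 by rewrite subr_gt0 invf_lt1 // (lt_trans ltr01).
suff small eta : 0 < eta -> eta <= 1 - `|b|^-1 ->
    exists m n : nat, [/\ (0 < m)%N, (0 < n)%N & `|a ^+ m - b ^+ n| < eta * `|b ^+ n|].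
  case: (real_leP (gtr0_real eps_gt0) (gtr0_real c_gt0)) => [|c_lt]; first exact: small.
  have [m [n [m_gt0 n_gt0 close]]] := small _ c_gt0 (lexx _).
  by exists m, n; split=> //; rewrite (lt_le_trans close) // ler_wpM2r // ltW.
move=> eta_gt0 eta_le.
have a_gt0 : 0 < `|a| := lt_trans ltr01 a_gt1.
have d_gt0 : 0 < eta / `|a| by rewrite divr_gt0.
have ratio_le1 n : `|pow_ratio a_gt1 b_gt1 n| <= 1 by exact/ltW/norm_pow_ratio_lt1.
have [n1 [n2 [lt_n12 close]]] := unit_disk_close_pair d_gt0 ratio_le1.
by apply: close_pow_ratios lt_n12 eta_le _; rewrite mulrC -ltr_pdivlMr.
Qed.

Theorem corollary2p3 (eps alpha beta : algC) :
  0 < eps ->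
  gaussian_int alpha -> gaussian_int beta ->
  alpha != 0 -> beta != 0 ->
  mult_indep alpha beta ->
  1 < `|alpha| -> 1 < `|beta| ->
  exists m n : nat, [/\ (0 < m)%N, (0 < n)%N &
    `|alpha ^+ m - beta ^+ n| < eps * `|beta ^+ n|].
Proof. by move=> eps_gt0 _ _ _ _ _; apply: exists_close_powers. Qed.
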